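(* Let $S$ be a semigroup whose loop problem (with respect to some finite semigroup choice of generators) is context-free, and let $\sigma : X^+ \to S$ be any finite semigroup choice of generators for $S$. Then the multiplication table $\{u \# v \# w^R : u, v, w \in X^+, (uv)\sigma = w\sigma\}$ of $S$ with respect to $\sigma$ and $X^+$ is a context-free language. In particular, $S$ is word hyperbolic in the sense of Duncan and Gilman.
   Context: Maps are written on the right. $X^+$, $X^*$: free semigroup and free monoid on $X$. For a monoid $M$ and surjective monoid morphism $\sigma : X^* \to M$, let $\overline{X} = \{\overline{x} : x \in X\}$ be new symbols, $\hat{X} = X \cup \overline{X}$; the loop automaton has vertex set $M$, for each $a \in M$, $x \in X$ an edge $a \to a(x\sigma)$ labelled $x$ and an edge $a(x\sigma) \to a$ labelled $\overline{x}$; the loop problem is the set of labels of paths from the identity to the identity. For a semigroup $S$ and surjective morphism $\sigma : X^+ \to S$, the loop problem of $S$ is the loop problem of $S^1$ ($S$ with a new identity adjoined even if one exists) with respect to the extension $X^* \to S^1$. Here $\#$ is a new symbol not in $X$ and $w^R$ is the reversal of $w$. A choice of representatives for $S$ is a finite semigroup choice of generators $\sigma : X^+ \to S$ with a subset $R \subseteq X^+$ such that $R\sigma = S$; it is regular if $R$ is regular; the multiplication table w.r.t. $\sigma$ and $R$ is $\{u\#v\#w^R : u,v,w \in R, (uv)\sigma = w\sigma\}$. $S$ is word hyperbolic in the sense of Duncan and Gilman if it admits a regular choice of representatives whose multiplication table is context-free. *)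

From mathcomp Require Import all_boot.
Set Implicit Arguments. Unset Strict Implicit. Unset Printing Implicit Defensive.

Definition language (T : Type) := seq T -> Prop.

Section CFG.
Variables (T N : finType).

Definition sform := seq (N + T)%type.

Inductive cfg_step (rules : seq (N * sform)) : sform -> sform -> Prop :=
| CfgStep (a b : sform) (A : N) (r : sform) :
    (A, r) \in rules -> cfg_step rules (a ++ inl A :: b) (a ++ r ++ b).

Inductive cfg_derives (rules : seq (N * sform)) : sform -> sform -> Prop :=
| CfgRefl u : cfg_derives rules u u
| CfgTrans u v w : cfg_step rules u v -> cfg_derives rules v w ->
                   cfg_derives rules u w.

Definition cfg_language (rules : seq (N * sform)) (start : N) : language T :=
  fun w => cfg_derives rules [:: inl start] (map inr w).
End CFG.

Definition context_free (T : finType) (L : language T) : Prop :=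
  exists (N : finType) (rules : seq (N * sform T N)) (start : N),
    forall w, L w <-> cfg_language rules start w.

Definition regular (T : finType) (L : language T) : Prop :=
  exists (Q : finType) (q0 : Q) (delta : Q -> T -> Q) (acc : pred Q),
    forall w, L w <-> acc (foldl delta q0 w).

(* S^1 : S with a new identity adjoined (None), even if S has one. *)
Definition mul1 (S : Type) (mul : S -> S -> S) (a b : option S) : option S :=
  match a, b with
  | None, _ => b
  | _, None => a
  | Some x, Some y => Some (mul x y)
  end.

(* On a nonempty word u, eval1 u = Some (u sigma) where sigma : X^+ -> S is the
   semigroup morphism determined by f; eval1 [::] = None (the identity of S^1). *)
Definition eval1 (S : Type) (mul : S -> S -> S) (X : Type) (f : X -> S)
    (w : seq X) : option S :=
  foldl (mul1 mul) None (map (fun x => Some (f x)) w).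

(* f : X -> S induces a surjective morphism sigma : X^+ -> S
   (a finite semigroup choice of generators when X is a finType). *)
Definition generates (S : Type) (mul : S -> S -> S) (X : Type) (f : X -> S) :
    Prop :=
  forall s : S, exists w : seq X, eval1 mul f w = Some s.

(** * Loop problem.  hat X = X + X, inl x = x, inr x = xbar.
    Loop automaton on vertex set S^1: edges a --x--> a(x sigma) and
    a(x sigma) --xbar--> a. *)
Definition loop_edge (S : Type) (mul : S -> S -> S) (X : Type) (f : X -> S)
    (a : option S) (l : X + X) (b : option S) : Prop :=
  match l with
  | inl x => b = mul1 mul a (Some (f x))
  | inr x => a = mul1 mul b (Some (f x))
  end.

Fixpoint loop_walk (S : Type) (mul : S -> S -> S) (X : Type) (f : X -> S)
    (a : option S) (w : seq (X + X)) (b : option S) : Prop :=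
  match w with
  | [::] => a = b
  | l :: w' => exists c, loop_edge mul f a l c /\ loop_walk mul f c w' b
  end.

Definition loop_problem (S : Type) (mul : S -> S -> S) (X : finType)
    (f : X -> S) : language (X + X)%type :=
  fun w => loop_walk mul f None w None.

(** * Multiplication table.  Alphabet option X, with None playing the role of #.
    { u # v # w^R : u, v, w in R, (uv) sigma = w sigma } with R a set of
    nonempty words. *)
Definition mult_table (S : Type) (mul : S -> S -> S) (X : finType)
    (f : X -> S) (R : seq X -> Prop) : language (option X) :=
  fun t => exists u v w : seq X,
    [/\ R u /\ R v /\ R w, (0 < size u) && (0 < size v) && (0 < size w),
        eval1 mul f (u ++ v) = eval1 mul f w &
        t = map Some u ++ None :: map Some v ++ None :: map Some (rev w)].

Definition nonempty_words (X : Type) : seq X -> Prop := fun u => 0 < size u.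

Definition DG_hyperbolic (S : Type) (mul : S -> S -> S) : Prop :=
  exists (X : finType) (f : X -> S) (R : seq X -> Prop),
    [/\ generates mul f,
        (forall u, R u -> 0 < size u),
        (forall s, exists u, R u /\ eval1 mul f u = Some s),
        regular R &
        context_free (mult_table mul f R)].

From mathcomp Require Import all_boot.
Set Implicit Arguments. Unset Strict Implicit. Unset Printing Implicit Defensive.

(* Context-free languages are closed under finite transductions, by the
   classical triple construction on grammars.  If every generator x of f is
   written as a g-word c(x), the loop problem of f is the preimage of that of
   g under the nonerasing morphism x |-> c(x), xbar |-> reverse of the barred
   c(x); hence it is context-free.  A word u v (wbar)^R labels a loop at the
   identity exactly when (uv)sigma = w sigma, so a four-state transducer that
   inserts the two markers # turns the loop problem into the multiplication
   table.  As X^+ is regular, this table witnesses Duncan-Gilman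
   hyperbolicity. *)

Section Yields.
Variables (T N : finType) (rules : seq (N * sform T N)).

Inductive yields : sform T N -> seq T -> Prop :=
| YieldsNil : yields [::] [::]
| YieldsTerminal a s w : yields s w -> yields (inr a :: s) (a :: w)
| YieldsRule A r s w1 w2 : (A, r) \in rules -> yields r w1 -> yields s w2 ->
    yields (inl A :: s) (w1 ++ w2).

Lemma yields_cat s1 s2 w : yields (s1 ++ s2) w <->
  exists w1 w2, [/\ w = w1 ++ w2, yields s1 w1 & yields s2 w2].
Proof.
split.
- elim: s1 w => [|y s1 IH] w /=; first by exists [::], w; split=> //; constructor.
  move=> Y; inversion Y as [|a s w0 Yw|A r s w1 w0 Ar Yr Yw]; subst.
  + have [w1 [w2 [-> Y1 Y2]]] := IH _ Yw.
    by exists (a :: w1), w2; split=> //; constructor.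
  + have [w3 [w4 [-> Y1 Y2]]] := IH _ Yw.
    by exists (w1 ++ w3), w4; rewrite catA; split=> //; apply: YieldsRule Ar Yr Y1.
- case=> w1 [w2 [-> Y1 Y2]]; elim: Y1 => //= [a s w0 _ IH|A r s w3 w4 Ar Yr _ _ IH].
  + exact: YieldsTerminal.
  + by rewrite -catA; apply: YieldsRule Ar Yr IH.
Qed.

Lemma yields_terminalsP x w : yields (map inr x) w <-> w = x.
Proof.
split=> [|->]; last by elim: x => [|a x IH]; constructor.
by elim: x w => [|a x IH] w Y; inversion Y as [|b s w' Yw|]; rewrite ?(IH _ Yw).
Qed.

Lemma yields_nonterminal A w :
  yields [:: inl A] w <-> exists2 r, (A, r) \in rules & yields r w.
Proof.
split=> [Y|[r Ar Yr]]; last by rewrite -[w]cats0; apply: YieldsRule Ar Yr YieldsNil.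
inversion Y as [| |B r s w1 w2 Ar Yr Ynil]; inversion Ynil.
by exists r; rewrite ?cats0.
Qed.

Lemma cfg_derives_trans u v w :
  cfg_derives rules u v -> cfg_derives rules v w -> cfg_derives rules u w.
Proof. by elim=> // u1 v1 w1 step _ IH /IH; apply: CfgTrans step. Qed.

Lemma cfg_derives_ctx a b u v : cfg_derives rules u v ->
  cfg_derives rules (a ++ u ++ b) (a ++ v ++ b).
Proof.
elim=> [u1|u1 v1 w1 [a1 b1 A r Ar] _ IH]; first exact: CfgRefl.
apply: CfgTrans IH; rewrite -!catA /=.
by have := CfgStep (a ++ a1) (b1 ++ b) Ar; rewrite -!catA.
Qed.

Lemma yields_cfg_derives s w : yields s w -> cfg_derives rules s (map inr w).
Proof.
elim=> [|a s1 w1 _ IH|A r s1 w1 w2 Ar _ IHr _ IHs]; first exact: CfgRefl.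
  by have := cfg_derives_ctx [:: inr a] [::] IH; rewrite !cats0.
apply: CfgTrans (CfgStep [::] s1 Ar) _; rewrite map_cat.
apply: cfg_derives_trans (cfg_derives_ctx [::] s1 IHr) _.
by have := cfg_derives_ctx (map inr w1) [::] IHs; rewrite !cats0.
Qed.

Lemma cfg_derives_yields u w : cfg_derives rules u (map inr w) -> yields u w.
Proof.
move Ew: (map inr w) => v D.
elim: D Ew => [u1 <-|u1 v1 w1 [a b A r Ar] _ IH /IH]; first exact/yields_terminalsP.
case/yields_cat=> [wa [wrb [-> Ya /yields_cat [wr [wb [-> Yr Yb]]]]]].
by apply/yields_cat; exists wa, (wr ++ wb); split=> //; apply: YieldsRule Ar Yr Yb.
Qed.

Lemma cfg_languageP A w : cfg_language rules A w <-> yields [:: inl A] w.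
Proof. by split=> [/cfg_derives_yields|/yields_cfg_derives]. Qed.

End Yields.

Lemma context_free_ext (T : finType) (L1 L2 : language T) :
  (forall w, L1 w <-> L2 w) -> context_free L1 -> context_free L2.
Proof.
move=> L12 [N [rules [A L1P]]]; exists N, rules, A => w.
by split=> [/L12/L1P|/L1P/L12].
Qed.


Section Transduction.
Variables (A B Q : finType) (trans : Q -> A -> Q -> seq (seq B)).

Fixpoint run (p : Q) (i : seq A) (w : seq B) (q : Q) : Prop :=
  if i is a :: i' then
    exists q' o w', [/\ o \in trans p a q', w = o ++ w' & run q' i' w' q]
  else w = [::] /\ p = q.

Lemma run_cat p i1 i2 w q : run p (i1 ++ i2) w q <->
  exists m w1 w2, [/\ w = w1 ++ w2, run p i1 w1 m & run m i2 w2 q].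
Proof.
elim: i1 p w => [|a i1 IH] p w /=.
  by split=> [R|[m [w1 [w2 [-> [-> ->] R]]]]] //; exists p, [::], w.
split=> [[q' [o [w' [Ho -> /IH [m [w1 [w2 [-> R1 R2]]]]]]]]|].
  by exists m, (o ++ w1), w2; rewrite catA; split=> //; exists q', o, w1.
case=> m [_ [w2 [-> [q' [o [w1 [Ho -> R1]]]] R2]]].
exists q', o, (w1 ++ w2); rewrite catA; split=> //.
by apply/IH; exists m, w1, w2.
Qed.

Variables (N : finType) (rules : seq (N * sform A N)) (S0 : N).
Variables (q0 : Q) (final : pred Q).

(* The nonterminal (p, X, q) derives the outputs of the runs from p to q on
   the words derived from X; (p, a, q) does the same for a single letter a. *)
Definition transd_nonterminal : finType := option ((Q * N * Q) + (Q * A * Q)).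

Definition annot (p : Q) (y : N + A) (q : Q) : transd_nonterminal :=
  Some (match y with inl X => inl (p, X, q) | inr a => inr (p, a, q) end).

Fixpoint annotate (p : Q) (r : sform A N) : seq (sform B transd_nonterminal * Q) :=
  if r is y :: r' then
    [seq (inl (annot p y m) :: x.1, x.2) | m <- enum Q, x <- annotate m r']
  else [:: ([::], p)].

Lemma mem_annotate_nil p s q :
  ((s, q) \in annotate p [::]) = (s == [::]) && (q == p).
Proof. by rewrite inE xpair_eqE. Qed.

Lemma mem_annotate_cons p y r s q : (s, q) \in annotate p (y :: r) <->
  exists m s', s = inl (annot p y m) :: s' /\ (s', q) \in annotate m r.
Proof.
split=> [/allpairsPdep [m [[s' q'] [_ sq' [-> ->]]]]|[m [s' [-> sq']]]].
  by exists m, s'.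
by apply/allpairsPdep; exists m, (s', q); rewrite mem_enum.
Qed.

Definition transd_rules : seq (transd_nonterminal * sform B transd_nonterminal) :=
  flatten [seq [seq (annot p (inl Xr.1) sq.2, sq.1) | sq <- annotate p Xr.2]
          | p <- enum Q, Xr <- rules]
  ++ [seq (annot t.1.1 (inr t.1.2) t.2, map inr o)
     | t <- enum {: Q * A * Q}, o <- trans t.1.1 t.1.2 t.2]
  ++ [seq (None, [:: inl (annot q0 (inl S0) q)]) | q <- enum Q & final q].

Lemma mem_transd_rules Y s : (Y, s) \in transd_rules <->
  match Y with
  | Some (inl (p, X, q)) => exists2 r, (X, r) \in rules & (s, q) \in annotate p r
  | Some (inr (p, a, q)) => exists2 o, o \in trans p a q & s = map inr o
  | None => exists2 q, final q & s = [:: inl (annot q0 (inl S0) q)]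
  end.
Proof.
split.
  rewrite !mem_cat => /or3P [/flattenP [l /allpairsPdep [p [[X r] [_ Xr ->]]]]|
                             /allpairsPdep [[[p a] q] [o [_ o_tr [-> ->]]]]|].
  - by case/mapP=> [[s' q] sq [-> ->]]; exists r.
  - by exists o.
  - by case/mapP=> q; rewrite mem_filter => /andP [fq _] [-> ->]; exists q.
rewrite !mem_cat; case: Y => [[[[p X] q]|[[p a] q]]|] [].
- move=> r Xr sq; apply/orP; left; apply/flattenP.
  exists [seq (annot p (inl (X, r).1) sq.2, sq.1) | sq <- annotate p (X, r).2].
    by apply/allpairsPdep; exists p, (X, r); rewrite mem_enum.
  by apply/mapP; exists (s, q).
- move=> o o_tr ->; apply/or3P; apply: Or32.
  by apply/allpairsPdep; exists (p, a, q), o; rewrite mem_enum.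
- move=> q fq ->; apply/or3P; apply: Or33.
  by apply/mapP; exists q; rewrite // mem_filter fq mem_enum.
Qed.

Lemma yields_transd_sound s w : yields transd_rules s w ->
  forall p r q, (s, q) \in annotate p r ->
  exists2 i, yields rules r i & run p i w q.
Proof.
elim=> [|b s1 w1 _ _|Y r' s1 w1 w2 Yr' Yw1 IH1 _ IH2] p [|y r] q //.
- by rewrite mem_annotate_nil => /andP [_ /eqP ->]; exists [::]; first exact: YieldsNil.
1,2: by case/mem_annotate_cons=> m [s' []].
case/mem_annotate_cons=> m [s' [[EY <-] sq]].
have [i2 Yi2 R2] := IH2 _ _ _ sq.
move: Yr'; rewrite {}EY => /mem_transd_rules; case: y => [X|a] /= [].
- move=> r0 Xr0 /IH1 [i1 Yi1 R1].
  exists (i1 ++ i2); first exact: YieldsRule Xr0 Yi1 Yi2.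
  by apply/run_cat; exists m, w1, w2.
- move=> o o_tr Ero; move: Yw1; rewrite Ero => /yields_terminalsP ->.
  by exists (a :: i2); [exact: YieldsTerminal | exists m, o, w2].
Qed.

Lemma yields_transd_complete r i : yields rules r i ->
  forall p w q, run p i w q ->
  exists2 s, (s, q) \in annotate p r & yields transd_rules s w.
Proof.
elim=> [|a r1 i1 _ IH|X r0 r1 i1 i2 Xr0 _ IH1 _ IH2] p w q.
- by case=> -> ->; exists [::]; [rewrite mem_annotate_nil !eqxx | exact: YieldsNil].
- case=> m [o [w' [o_tr -> /IH [s sq Ys]]]].
  exists (inl (annot p (inr a) m) :: s); first by apply/mem_annotate_cons; exists m, s.
  apply: YieldsRule Ys; last exact/yields_terminalsP.
  by apply/mem_transd_rules; exists o.
- case/run_cat=> m [w1 [w2 [-> /IH1 [s1 sq1 Ys1] /IH2 [s2 sq2 Ys2]]]].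
  exists (inl (annot p (inl X) m) :: s2).
    by apply/mem_annotate_cons; exists m, s2.
  by apply: YieldsRule Ys1 Ys2; apply/mem_transd_rules; exists r0.
Qed.

End Transduction.

Lemma context_free_transduction (A B Q : finType)
    (trans : Q -> A -> Q -> seq (seq B)) (q0 : Q) (final : pred Q)
    (L : language A) : context_free L ->
  context_free (fun w => exists i q, [/\ L i, final q & run trans q0 i w q]).
Proof.
case=> N [rules [S0 LP]].
exists (transd_nonterminal A Q N), (transd_rules trans rules S0 q0 final), None => w.
split.
- case=> i [q [/LP/cfg_languageP Yi fq R]]; apply/cfg_languageP/yields_nonterminal.
  have [s] := yields_transd_complete S0 q0 final Yi R.
  case/mem_annotate_cons=> m [s' [-> sq]] Ys.
  move: sq; rewrite mem_annotate_nil => /andP [/eqP Es' /eqP Eq].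
  exists [:: inl (annot q0 (inl S0) q)]; last by rewrite Es' -Eq in Ys.
  by apply/mem_transd_rules; exists q.
- case/cfg_languageP/yields_nonterminal=> s /mem_transd_rules [q fq ->] Ys.
  have sq : ([:: inl (annot q0 (inl S0) q)], q) \in annotate B q0 [:: inl S0 : N + A].
    by apply/mem_annotate_cons; exists q, [::]; rewrite mem_annotate_nil !eqxx.
  have [i Yi R] := yields_transd_sound Ys sq.
  by exists i, q; split=> //; apply/LP/cfg_languageP.
Qed.

Fixpoint suffixes (T : Type) (s : seq T) : seq (seq T) :=
  s :: if s is _ :: s' then suffixes s' else [::].

Lemma suffixes_refl (T : eqType) (s : seq T) : s \in suffixes s.
Proof. by case: s => [|x s]; apply: mem_head. Qed.

Lemma mem_suffixes_behead (T : eqType) (x : T) s t :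
  x :: s \in suffixes t -> s \in suffixes t.
Proof.
elim: t => [|y t IH] //=; rewrite inE => /orP [/eqP [_ ->]|/IH st].
  by rewrite inE suffixes_refl orbT.
by rewrite inE st orbT.
Qed.

Section MorphismPreimage.
Variables (A B : finType) (h : A -> seq B).

(* A state is the suffix of some h a that remains to be read. *)
Definition preim_states : seq (seq B) :=
  [::] :: flatten [seq suffixes (h a) | a <- enum A].

Definition preim_state : finType := seq_sub preim_states.

Definition preim_start : preim_state := SeqSub (mem_head [::] _).

Definition preim_trans (p : preim_state) (b : B) (q : preim_state) : seq (seq A) :=
  if val p is b' :: r then (if (b' == b) && (val q == r) then [:: [::]] else [::])
  else [seq [:: a] | a <- enum A & h a == b :: val q].

Lemma preim_states_behead b r : b :: r \in preim_states -> r \in preim_states.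
Proof.
rewrite inE /= => /flatten_mapP [a _ /mem_suffixes_behead r_a].
by rewrite inE; apply/orP; right; apply/flatten_mapP; exists a; rewrite ?mem_enum.
Qed.

Lemma image_in_preim_states a : h a \in preim_states.
Proof.
rewrite inE; apply/orP; right; apply/flatten_mapP.
by exists a; rewrite ?mem_enum ?suffixes_refl.
Qed.

Lemma run_preim_sound p i z : run preim_trans p i z preim_start ->
  i = val p ++ flatten (map h z).
Proof.
elim: i p z => [|b i IH] p z /=; first by case=> -> ->.
case=> q [o [z' [o_tr -> /IH ->]]]; move: o_tr.
case: p => [[|b' r] ?]; rewrite /preim_trans /=.
  by case/mapP=> a; rewrite mem_filter => /andP [/eqP ha _] ->; rewrite /= ha.
by case: ifP; rewrite ?inE // => /andP [/eqP -> /eqP ->] /eqP ->.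
Qed.

Lemma run_preim_cons b r (br_st : b :: r \in preim_states) w z :
  run preim_trans (SeqSub (preim_states_behead br_st)) w z preim_start ->
  run preim_trans (SeqSub br_st) (b :: w) z preim_start.
Proof.
move=> R; exists (SeqSub (preim_states_behead br_st)), [::], z.
by rewrite /preim_trans /= !eqxx inE.
Qed.

Hypothesis h_nonerasing : forall a, h a != [::].

Lemma run_preim_complete z r (r_st : r \in preim_states) :
  run preim_trans (SeqSub r_st) (r ++ flatten (map h z)) z preim_start.
Proof.
elim: z r r_st => [|a z IHz] r; elim: r => [|b r IHr] r_st;
  try exact: run_preim_cons (IHr _).
  by split=> //; apply: val_inj.
rewrite /=; have := image_in_preim_states a; have := h_nonerasing a.
case ha: (h a) => [|b r] // _ br_st.
exists (SeqSub (preim_states_behead br_st)), [:: a], z; split; [|by []|exact: IHz].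
by apply/mapP; exists a; rewrite // mem_filter ha eqxx mem_enum.
Qed.

Lemma context_free_preim_morph (L : language B) :
  context_free L -> context_free (fun z => L (flatten (map h z))).
Proof.
move=> /(context_free_transduction preim_trans preim_start (pred1 preim_start)).
apply: context_free_ext => z; split.
  by case=> i [q [Li /eqP -> /run_preim_sound Ei]]; rewrite Ei in Li.
move=> Lz; exists (flatten (map h z)), preim_start; split=> //.
exact: (run_preim_complete z (mem_head [::] _)).
Qed.

End MorphismPreimage.

Section MarkedTriples.
Variable X : finType.

Definition marked_triple (u v t : seq X) : seq (option X) :=
  map Some u ++ None :: map Some v ++ None :: map Some t.

Definition marked_triples (L : language (X + X)) : language (option X) :=
  fun s => exists u v t, [/\ 0 < size u, 0 < size v, 0 < size t,
    L (map inl (u ++ v) ++ map inr t) & s = marked_triple u v t].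

(* Phase 1 reads u, phase 2 reads v and phase 3 reads the barred word; the
   first letter of each phase is read on entering it, so all three parts are
   nonempty. *)
Definition marker_trans (p : 'I_4) (a : X + X) (q : 'I_4) : seq (seq (option X)) :=
  match val p, a, val q with
  | 0, inl x, 1 | 1, inl x, 1 | 2, inl x, 2 | 3, inr x, 3 => [:: [:: Some x]]
  | 1, inl x, 2 | 2, inr x, 3 => [:: [:: None; Some x]]
  | _, _, _ => [::]
  end.

Lemma run_marker3 p i z : val p = 3 -> run marker_trans p i z ord_max ->
  exists t, i = map inr t /\ z = map Some t.
Proof.
elim: i z p => [|a i IH] z p p3 /=; first by case=> ->; exists [::].
case=> [[[|[|[|[|m]]]] m4]] [o [z' [o_tr -> R]]] //;
  rewrite /marker_trans p3 /= in o_tr; case: a o_tr => x //; rewrite inE => /eqP ->.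
by have [t [-> ->]] := IH _ (Ordinal m4) erefl R; exists (x :: t).
Qed.

Lemma run_marker2 p i z : val p = 2 -> run marker_trans p i z ord_max ->
  exists v t, [/\ 0 < size t, i = map inl v ++ map inr t &
                  z = map Some v ++ None :: map Some t].
Proof.
elim: i z p => [|a i IH] z p p2 /=; first by case=> _ E; move: p2; rewrite E.
case=> [[[|[|[|[|m]]]] m4]] [o [z' [o_tr -> R]]] //;
  rewrite /marker_trans p2 /= in o_tr; case: a o_tr => x //; rewrite inE => /eqP ->.
  by have [v [t [t0 -> ->]]] := IH _ (Ordinal m4) erefl R; exists (x :: v), t.
by have [t [-> ->]] := run_marker3 (p := Ordinal m4) erefl R; exists [::], (x :: t).
Qed.

Lemma run_marker1 p i z : val p = 1 -> run marker_trans p i z ord_max ->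
  exists u v t, [/\ 0 < size v, 0 < size t,
    i = map inl (u ++ v) ++ map inr t & z = marked_triple u v t].
Proof.
elim: i z p => [|a i IH] z p p1 /=; first by case=> _ E; move: p1; rewrite E.
case=> [[[|[|[|[|m]]]] m4]] [o [z' [o_tr -> R]]] //;
  rewrite /marker_trans p1 /= in o_tr; case: a o_tr => x //; rewrite inE => /eqP ->.
  by have [u [v [t [v0 t0 -> ->]]]] := IH _ (Ordinal m4) erefl R; exists (x :: u), v, t.
have [v [t [t0 -> ->]]] := run_marker2 (p := Ordinal m4) erefl R.
by exists [::], (x :: v), t.
Qed.

Lemma run_marker3_complete p t : val p = 3 ->
  run marker_trans p (map inr t) (map Some t) ord_max.
Proof.
elim: t p => [|x t IH] p p3 /=; first by split=> //; apply: val_inj.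
exists ord_max, [:: Some x], (map Some t).
by rewrite /marker_trans p3 inE; split=> //; apply: IH.
Qed.

Lemma run_marker2_complete p v t : val p = 2 -> 0 < size t ->
  run marker_trans p (map inl v ++ map inr t)
    (map Some v ++ None :: map Some t) ord_max.
Proof.
elim: v p => [|x v IH] p p2 t0 /=.
  case: t t0 => [|x t] // _ /=; exists ord_max, [:: None; Some x], (map Some t).
  by rewrite /marker_trans p2 inE; split=> //; apply: run_marker3_complete.
exists p, [:: Some x], (map Some v ++ None :: map Some t).
by rewrite /marker_trans p2 inE; split=> //; apply: IH.
Qed.

Lemma run_marker1_complete p u v t : val p = 1 -> 0 < size v -> 0 < size t ->
  run marker_trans p (map inl (u ++ v) ++ map inr t) (marked_triple u v t) ord_max.
Proof.
elim: u p => [|x u IH] p p1 v0 t0 /=.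
  case: v v0 => [|x v] // _ /=.
  exists (Ordinal (isT : 2 < 4)), [:: None; Some x], (map Some v ++ None :: map Some t).
  by rewrite /marker_trans p1 inE; split=> //; apply: run_marker2_complete.
exists p, [:: Some x], (marked_triple u v t).
by rewrite /marker_trans p1 inE; split=> //; apply: IH.
Qed.

Lemma run_markerP i z : run marker_trans ord0 i z ord_max <->
  exists u v t, [/\ 0 < size u, 0 < size v, 0 < size t,
    i = map inl (u ++ v) ++ map inr t & z = marked_triple u v t].
Proof.
split=> [|[[|x u] [v [t [//= _ v0 t0 -> ->]]]]]; last first.
  exists (Ordinal (isT : 1 < 4)), [:: Some x], (marked_triple u v t).
  split; rewrite ?inE //.
  exact: (run_marker1_complete (p := Ordinal (isT : 1 < 4))) v0 t0.
case: i => [|a i] /=; first by case.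
case=> [[[|[|[|[|m]]]] m4]] [o [z' [o_tr -> R]]] //;
  rewrite /marker_trans /= in o_tr; case: a o_tr => x //; rewrite inE => /eqP ->.
have [u [v [t [v0 t0 -> ->]]]] := run_marker1 (p := Ordinal m4) erefl R.
by exists (x :: u), v, t.
Qed.

Lemma context_free_marked_triples (L : language (X + X)) :
  context_free L -> context_free (marked_triples L).
Proof.
move=> /(context_free_transduction marker_trans ord0 (pred1 ord_max)).
apply: context_free_ext => s; split.
  case=> i [q [Li /eqP -> /run_markerP [u [v [t [u0 v0 t0 Ei ->]]]]]].
  by exists u, v, t; rewrite -Ei.
case=> u [v [t [u0 v0 t0 Luvt ->]]].
exists (map inl (u ++ v) ++ map inr t), ord_max; split=> //.
by apply/run_markerP; exists u, v, t.
Qed.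

End MarkedTriples.

Section LoopWalks.
Variables (S : Type) (mul : S -> S -> S).
Hypothesis mulA : associative mul.

Lemma mul1A : associative (mul1 mul).
Proof. by case=> [a|] [b|] [c|] //=; rewrite mulA. Qed.

Lemma foldl_mul1 (s : seq (option S)) a :
  foldl (mul1 mul) a s = mul1 mul a (foldl (mul1 mul) None s).
Proof.
elim: s a => [|x s IH] a /=; first by case: a.
by rewrite IH [in RHS]IH mul1A.
Qed.

Variables (X : Type) (f : X -> S).

Lemma loop_walk_cat a w1 w2 b : loop_walk mul f a (w1 ++ w2) b <->
  exists c, loop_walk mul f a w1 c /\ loop_walk mul f c w2 b.
Proof.
elim: w1 a => [|l w1 IH] a /=; first by split=> [W|[c [-> W]]]; first exists a.
split=> [[c [E /IH [d [W1 W2]]]]|[d [[c [E W1]] W2]]].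
  by exists d; split; first exists c.
by exists c; split=> //; apply/IH; exists d.
Qed.

Lemma loop_walk_inl w a b :
  loop_walk mul f a (map inl w) b <-> b = mul1 mul a (eval1 mul f w).
Proof.
rewrite /eval1 -foldl_mul1; elim: w a => [|x w IH] a /=; first by split=> ->.
split=> [[c [-> /IH]] //|E].
by exists (mul1 mul a (Some (f x))); split=> //; apply/IH.
Qed.

Lemma loop_walk_inr w a b :
  loop_walk mul f a (map inr (rev w)) b <-> a = mul1 mul b (eval1 mul f w).
Proof.
rewrite /eval1 -foldl_mul1; elim/last_ind: w a => [|w x IH] a /=; first by split=> ->.
rewrite rev_rcons map_rcons foldl_rcons /=.
split=> [[c [-> /IH ->]] //|->].
by exists (foldl (mul1 mul) b [seq Some (f x) | x <- w]); split=> //; apply/IH.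
Qed.

End LoopWalks.

Section LoopProblem.
Variables (S : Type) (mul : S -> S -> S).
Hypothesis mulA : associative mul.
Variables (X : finType) (f : X -> S).

Lemma loop_problem_triple u v w :
  loop_problem mul f (map inl (u ++ v) ++ map inr (rev w)) <->
  eval1 mul f (u ++ v) = eval1 mul f w.
Proof.
split=> [/loop_walk_cat [c [/(loop_walk_inl mulA) -> /(loop_walk_inr mulA)]] //|E].
apply/loop_walk_cat; exists (eval1 mul f w).
by split; [apply/(loop_walk_inl mulA); rewrite E | apply/(loop_walk_inr mulA)].
Qed.

Lemma context_free_mult_table :
  context_free (loop_problem mul f) ->
  context_free (mult_table mul f (@nonempty_words X)).
Proof.
move=> /context_free_marked_triples; apply: context_free_ext => s; split.
  case=> u [v [t [u0 v0 t0]]]; rewrite -[t]revK => /loop_problem_triple Euvt ->.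
  by exists u, v, (rev t); rewrite /nonempty_words size_rev u0 v0 t0.
case=> u [v [w [[u0 [v0 w0]] _ Euvw ->]]].
exists u, v, (rev w); rewrite size_rev; split=> //.
exact/loop_problem_triple.
Qed.

Variables (Y : finType) (g : Y -> S) (code : X -> seq Y).
Hypothesis codeE : forall x, eval1 mul g (code x) = Some (f x).

Definition recode (l : X + X) : seq (Y + Y) :=
  match l with inl x => map inl (code x) | inr x => map inr (rev (code x)) end.

Lemma loop_edge_recode a l b :
  loop_edge mul f a l b <-> loop_walk mul g a (recode l) b.
Proof.
apply: iff_sym; case: l => x; rewrite /= -codeE.
  exact: loop_walk_inl.
exact: loop_walk_inr.
Qed.

Lemma loop_walk_recode a z b :
  loop_walk mul f a z b <-> loop_walk mul g a (flatten (map recode z)) b.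
Proof.
elim: z a => [|l z IH] a //=.
split=> [[c [/loop_edge_recode E /IH W]]|
         /loop_walk_cat [c [/loop_edge_recode E /IH W]]].
  by apply/loop_walk_cat; exists c.
by exists c.
Qed.

Lemma recode_nonerasing l : recode l != [::].
Proof.
have code_nil x : code x != [::] by apply/eqP=> E; have := codeE x; rewrite E.
by case: l => x /=; rewrite -size_eq0 size_map ?size_rev size_eq0 code_nil.
Qed.

Lemma context_free_loop_problem_recode :
  context_free (loop_problem mul g) -> context_free (loop_problem mul f).
Proof.
move=> /(context_free_preim_morph recode_nonerasing); apply: context_free_ext => z.
by split=> /loop_walk_recode.
Qed.

End LoopProblem.

Lemma regular_nonempty_words (X : finType) : regular (@nonempty_words X).
Proof.
exists bool, false, (fun _ _ => true), id => w.
by case: w => [|x w] //=; elim: w.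
Qed.

Theorem proposition6p4 (S : Type) (mul : S -> S -> S)
    (mulA : associative mul)
    (hloop : exists (Y : finType) (g : Y -> S),
        generates mul g /\ context_free (loop_problem mul g))
    (X : finType) (f : X -> S) (hf : generates mul f) :
  context_free (mult_table mul f (@nonempty_words X)) /\ DG_hyperbolic mul.
Proof.
have [Y [g [hg loopCF]]] := hloop.
have /fin_all_exists [code codeE] :
    forall x, exists w : seq Y, eval1 mul g w = Some (f x) by move=> x; apply: hg.
have loopXCF := context_free_loop_problem_recode mulA codeE loopCF.
have tableCF := context_free_mult_table mulA loopXCF.
split=> //; exists X, f, (@nonempty_words X); split=> //.
- move=> s; have [w ws] := hf s.
  by exists w; split=> //; case: w ws.
- exact: regular_nonempty_words.
Qed.
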